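(* Let $T=(T,\mu,\iota)$ be a normal lax double monad on an equipment $\mathcal K$. For horizontal morphism $K\colon C\nrightarrow D$ and vertical morphism $g\colon B\to D$, let $K(\mathrm{id},g)\colon C\nrightarrow B$ be a restriction of $K$ along $\mathrm{id}_C$ and $g$. If the cells $\iota_K$ and $\iota_{g^*}$ (where $g^*\colon D\nrightarrow B$ is the conjoint of $g$) satisfy the right Beck–Chevalley condition, then so does $\iota_{K(\mathrm{id},g)}$.
   Context: Double categories: a double category has objects, vertical morphisms (composition $\circ$), horizontal morphisms $J\colon A\nrightarrow B$ (composition $\odot$ in diagrammatic order, units $1_A$, weakly associative/unital) and cells with horizontal source $J\colon A\nrightarrow B$, horizontal target $K\colon C\nrightarrow D$, vertical sides $f\colon A\to C$, $g\colon B\to D$. A cell $\phi\colon J\Rightarrow K$ with sides $f,g$ is cartesian if every cell $H\Rightarrow K$ with sides $f\circ h,g\circ k$ factors uniquely through $\phi$ via a cell $H\Rightarrow J$ with sides $h,k$; then $J=K(f,g)$ is a restriction. Opcartesian cells dually. The companion $f_*=1_C(f,\mathrm{id})$ and conjoint $f^*=1_C(\mathrm{id},f)$ of $f\colon A\to C$; $f_*$ is equivalently given by an opcartesian cell $1_A\Rightarrow f_*$ with sides $\mathrm{id}_A,f$. An equipment has all companions and conjoints. A normal lax double monad $(T,\mu,\iota)$: a lax double functor $T\colon\mathcal K\to\mathcal K$ preserving vertical structure and horizontal units strictly and horizontal composition up to coherent compositor cells, with double transformations $\mu\colon T^2\Rightarrow T$, $\iota\colon\mathrm{id}\Rightarrow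 T$ satisfying the monad axioms; $\iota$ consists of vertical morphisms $\iota_A\colon A\to TA$ and cells $\iota_J\colon J\Rightarrow TJ$ with sides $\iota_A,\iota_B$, natural, compatible with compositors, $\iota_{1_A}=1_{\iota_A}$. Right Beck–Chevalley condition: for $J\colon A\nrightarrow B$, $\iota_{J*}\colon J\odot\iota_{B*}\Rightarrow\iota_{A*}\odot TJ$ is the horizontal composite of the opcartesian cell $1_A\Rightarrow\iota_{A*}$ (sides $\mathrm{id}_A,\iota_A$), $\iota_J$, and the cartesian cell $\iota_{B*}\Rightarrow 1_{TB}$ (sides $\iota_B,\mathrm{id}_{TB}$); $\iota_J$ satisfies the condition if $\iota_{J*}$ is invertible. *)

(* A (pseudo) double category is presented "algebraically": sorts of
   objects, vertical morphisms, horizontal morphisms and cells, with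
   boundary maps, total composition operations and axioms that constrain
   them on composable inputs. *)

Record DCat := {
  ob : Type;
  ver : Type;
  vdom : ver -> ob; vcod : ver -> ob;
  vid : ob -> ver;
  vcomp : ver -> ver -> ver;        (* vcomp g f = g o f   (f first) *)
  hor : Type;
  hdom : hor -> ob; hcod : hor -> ob;
  hunit : ob -> hor;
  hcomp : hor -> hor -> hor;        (* hcomp J K = J (.) K, diagrammatic: J : A -|-> B, K : B -|-> C *)
  cell : Type;
  csrc : cell -> hor;
  ctgt : cell -> hor;
  cleft : cell -> ver;
  cright : cell -> ver;
  cid : hor -> cell;
  ccomp : cell -> cell -> cell;     (* ccomp phi psi : phi then psi (vertical composition) *)
  cunit : ver -> cell;
  chcomp : cell -> cell -> cell;    (* horizontal composition of cells (diagrammatic) *)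
  assoc : hor -> hor -> hor -> cell;
  lunitor : hor -> cell;
  runitor : hor -> cell
}.

Arguments vdom {d} _. Arguments vcod {d} _. Arguments vid {d} _.
Arguments vcomp {d} _ _. Arguments hdom {d} _. Arguments hcod {d} _.
Arguments hunit {d} _. Arguments hcomp {d} _ _. Arguments csrc {d} _.
Arguments ctgt {d} _. Arguments cleft {d} _. Arguments cright {d} _.
Arguments cid {d} _. Arguments ccomp {d} _ _. Arguments cunit {d} _.
Arguments chcomp {d} _ _. Arguments assoc {d} _ _ _. Arguments lunitor {d} _.
Arguments runitor {d} _.

Section DoubleCategories.
Context {D : DCat}.

Definition IsCell (phi : cell D) (J K : hor D) (f g : ver D) : Prop :=
  csrc phi = J /\ ctgt phi = K /\ cleft phi = f /\ cright phi = g.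

Definition globular (phi : cell D) : Prop :=
  cleft phi = vid (hdom (csrc phi)) /\ cright phi = vid (hcod (csrc phi)).

Definition inverse_cells (phi psi : cell D) : Prop :=
  csrc psi = ctgt phi /\ ctgt psi = csrc phi /\
  ccomp phi psi = cid (csrc phi) /\ ccomp psi phi = cid (ctgt phi).

Definition globular_iso (phi : cell D) : Prop :=
  globular phi /\ exists psi, globular psi /\ inverse_cells phi psi.

Definition cartesian (phi : cell D) : Prop :=
  forall (psi : cell D) (h k : ver D),
    ctgt psi = ctgt phi ->
    vcod h = vdom (cleft phi) -> vcod k = vdom (cright phi) ->
    cleft psi = vcomp (cleft phi) h -> cright psi = vcomp (cright phi) k ->
    exists! theta, IsCell theta (csrc psi) (csrc phi) h k /\ ccomp theta phi = psi.

Definition opcartesian (phi : cell D) : Prop :=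
  forall (psi : cell D) (h k : ver D),
    csrc psi = csrc phi ->
    vdom h = vcod (cleft phi) -> vdom k = vcod (cright phi) ->
    cleft psi = vcomp h (cleft phi) -> cright psi = vcomp k (cright phi) ->
    exists! theta, IsCell theta (ctgt phi) (ctgt psi) h k /\ ccomp phi theta = psi.

End DoubleCategories.

Record IsPseudoDouble (D : DCat) : Prop := {
  vid_dom : forall A : ob D, vdom (vid A) = A;
  vid_cod : forall A : ob D, vcod (vid A) = A;
  vcomp_dom : forall f g : ver D, vcod f = vdom g -> vdom (vcomp g f) = vdom f;
  vcomp_cod : forall f g : ver D, vcod f = vdom g -> vcod (vcomp g f) = vcod g;
  vcomp_idl : forall f : ver D, vcomp (vid (vcod f)) f = f;
  vcomp_idr : forall f : ver D, vcomp f (vid (vdom f)) = f;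
  vcomp_assoc : forall f g h : ver D, vcod f = vdom g -> vcod g = vdom h ->
      vcomp h (vcomp g f) = vcomp (vcomp h g) f;
  hunit_dom : forall A : ob D, hdom (hunit A) = A;
  hunit_cod : forall A : ob D, hcod (hunit A) = A;
  hcomp_dom : forall J K : hor D, hcod J = hdom K -> hdom (hcomp J K) = hdom J;
  hcomp_cod : forall J K : hor D, hcod J = hdom K -> hcod (hcomp J K) = hcod K;
  cell_bd : forall phi : cell D,
      hdom (csrc phi) = vdom (cleft phi) /\ hcod (csrc phi) = vdom (cright phi) /\
      hdom (ctgt phi) = vcod (cleft phi) /\ hcod (ctgt phi) = vcod (cright phi);
  cid_bd : forall J : hor D, IsCell (cid J) J J (vid (hdom J)) (vid (hcod J));
  ccomp_bd : forall phi psi : cell D, ctgt phi = csrc psi ->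
      IsCell (ccomp phi psi) (csrc phi) (ctgt psi)
             (vcomp (cleft psi) (cleft phi)) (vcomp (cright psi) (cright phi));
  ccomp_idl : forall phi : cell D, ccomp (cid (csrc phi)) phi = phi;
  ccomp_idr : forall phi : cell D, ccomp phi (cid (ctgt phi)) = phi;
  ccomp_assoc : forall phi psi chi : cell D,
      ctgt phi = csrc psi -> ctgt psi = csrc chi ->
      ccomp phi (ccomp psi chi) = ccomp (ccomp phi psi) chi;
  cunit_bd : forall f : ver D,
      IsCell (cunit f) (hunit (vdom f)) (hunit (vcod f)) f f;
  chcomp_bd : forall phi psi : cell D, cright phi = cleft psi ->
      IsCell (chcomp phi psi) (hcomp (csrc phi) (csrc psi)) (hcomp (ctgt phi) (ctgt psi))
             (cleft phi) (cright psi);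
  cunit_vid : forall A : ob D, cunit (vid A) = cid (hunit A);
  cunit_vcomp : forall f g : ver D, vcod f = vdom g ->
      cunit (vcomp g f) = ccomp (cunit f) (cunit g);
  chcomp_cid : forall J K : hor D, hcod J = hdom K ->
      chcomp (cid J) (cid K) = cid (hcomp J K);
  interchange : forall phi phi' psi psi' : cell D,
      ctgt phi = csrc psi -> ctgt phi' = csrc psi' ->
      cright phi = cleft phi' -> cright psi = cleft psi' ->
      chcomp (ccomp phi psi) (ccomp phi' psi') = ccomp (chcomp phi phi') (chcomp psi psi');
  assoc_bd : forall J K L : hor D, hcod J = hdom K -> hcod K = hdom L ->
      IsCell (assoc J K L) (hcomp (hcomp J K) L) (hcomp J (hcomp K L))
             (vid (hdom J)) (vid (hcod L));
  assoc_iso : forall J K L : hor D, hcod J = hdom K -> hcod K = hdom L ->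
      globular_iso (assoc J K L);
  assoc_nat : forall phi psi chi : cell D,
      cright phi = cleft psi -> cright psi = cleft chi ->
      ccomp (chcomp (chcomp phi psi) chi) (assoc (ctgt phi) (ctgt psi) (ctgt chi)) =
      ccomp (assoc (csrc phi) (csrc psi) (csrc chi)) (chcomp phi (chcomp psi chi));
  lunitor_bd : forall J : hor D,
      IsCell (lunitor J) (hcomp (hunit (hdom J)) J) J (vid (hdom J)) (vid (hcod J));
  lunitor_iso : forall J : hor D, globular_iso (lunitor J);
  lunitor_nat : forall phi : cell D,
      ccomp (chcomp (cunit (cleft phi)) phi) (lunitor (ctgt phi)) =
      ccomp (lunitor (csrc phi)) phi;
  runitor_bd : forall J : hor D,
      IsCell (runitor J) (hcomp J (hunit (hcod J))) J (vid (hdom J)) (vid (hcod J));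
  runitor_iso : forall J : hor D, globular_iso (runitor J);
  runitor_nat : forall phi : cell D,
      ccomp (chcomp phi (cunit (cright phi))) (runitor (ctgt phi)) =
      ccomp (runitor (csrc phi)) phi;
  pentagon : forall J K L M : hor D,
      hcod J = hdom K -> hcod K = hdom L -> hcod L = hdom M ->
      ccomp (assoc (hcomp J K) L M) (assoc J K (hcomp L M)) =
      ccomp (ccomp (chcomp (assoc J K L) (cid M)) (assoc J (hcomp K L) M))
            (chcomp (cid J) (assoc K L M));
  triangle : forall J K : hor D, hcod J = hdom K ->
      ccomp (assoc J (hunit (hcod J)) K) (chcomp (cid J) (lunitor K)) =
      chcomp (runitor J) (cid K)
}.

(* Equipment: every vertical morphism f : A -> C has a companion
   f_* = 1_C(f, id) and a conjoint f^* = 1_C(id, f), i.e. restrictions of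
   the horizontal unit 1_C (cartesian cells into 1_C). *)
Definition IsEquipment (D : DCat) : Prop :=
  forall f : ver D,
    (exists (E : hor D) (rho : cell D),
        IsCell rho E (hunit (vcod f)) f (vid (vcod f)) /\ cartesian rho) /\
    (exists (E : hor D) (rho : cell D),
        IsCell rho E (hunit (vcod f)) (vid (vcod f)) f /\ cartesian rho).

Record LaxData (D : DCat) := {
  FO : ob D -> ob D;
  FV : ver D -> ver D;
  FH : hor D -> hor D;
  FC : cell D -> cell D;
  Fcomp : hor D -> hor D -> cell D
}.
Arguments FO {D} _ _. Arguments FV {D} _ _. Arguments FH {D} _ _.
Arguments FC {D} _ _. Arguments Fcomp {D} _ _ _.

Record IsNormalLax {D : DCat} (F : LaxData D) : Prop := {
  FV_dom : forall f, vdom (FV F f) = FO F (vdom f);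
  FV_cod : forall f, vcod (FV F f) = FO F (vcod f);
  FH_dom : forall J, hdom (FH F J) = FO F (hdom J);
  FH_cod : forall J, hcod (FH F J) = FO F (hcod J);
  FC_bd : forall phi, IsCell (FC F phi) (FH F (csrc phi)) (FH F (ctgt phi))
                             (FV F (cleft phi)) (FV F (cright phi));
  FV_vid : forall A, FV F (vid A) = vid (FO F A);
  FV_vcomp : forall f g, vcod f = vdom g -> FV F (vcomp g f) = vcomp (FV F g) (FV F f);
  FC_cid : forall J, FC F (cid J) = cid (FH F J);
  FC_ccomp : forall phi psi, ctgt phi = csrc psi ->
      FC F (ccomp phi psi) = ccomp (FC F phi) (FC F psi);
  FH_hunit : forall A, FH F (hunit A) = hunit (FO F A);
  FC_cunit : forall f, FC F (cunit f) = cunit (FV F f);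
  Fcomp_bd : forall J K, hcod J = hdom K ->
      IsCell (Fcomp F J K) (hcomp (FH F J) (FH F K)) (FH F (hcomp J K))
             (vid (FO F (hdom J))) (vid (FO F (hcod K)));
  Fcomp_nat : forall phi psi, cright phi = cleft psi ->
      ccomp (chcomp (FC F phi) (FC F psi)) (Fcomp F (ctgt phi) (ctgt psi)) =
      ccomp (Fcomp F (csrc phi) (csrc psi)) (FC F (chcomp phi psi));
  Fcomp_assoc : forall J K L, hcod J = hdom K -> hcod K = hdom L ->
      ccomp (ccomp (chcomp (Fcomp F J K) (cid (FH F L))) (Fcomp F (hcomp J K) L))
            (FC F (assoc J K L)) =
      ccomp (ccomp (assoc (FH F J) (FH F K) (FH F L))
                   (chcomp (cid (FH F J)) (Fcomp F K L)))
            (Fcomp F J (hcomp K L));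
  Fcomp_lunit : forall J,
      ccomp (Fcomp F (hunit (hdom J)) J) (FC F (lunitor J)) = lunitor (FH F J);
  Fcomp_runit : forall J,
      ccomp (Fcomp F J (hunit (hcod J))) (FC F (runitor J)) = runitor (FH F J)
}.

Definition idLax (D : DCat) : LaxData D :=
  {| FO := fun A => A; FV := fun f => f; FH := fun J => J; FC := fun phi => phi;
     Fcomp := fun J K => cid (hcomp J K) |}.

Definition compLax {D : DCat} (F G : LaxData D) : LaxData D :=
  {| FO := fun A => FO G (FO F A);
     FV := fun f => FV G (FV F f);
     FH := fun J => FH G (FH F J);
     FC := fun phi => FC G (FC F phi);
     Fcomp := fun J K => ccomp (Fcomp G (FH F J) (FH F K)) (FC G (Fcomp F J K)) |}.

Record IsDoubleTransformation {D : DCat} (F G : LaxData D)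
    (alphaO : ob D -> ver D) (alphaH : hor D -> cell D) : Prop := {
  tr_dom : forall A, vdom (alphaO A) = FO F A;
  tr_cod : forall A, vcod (alphaO A) = FO G A;
  tr_bd : forall J, IsCell (alphaH J) (FH F J) (FH G J) (alphaO (hdom J)) (alphaO (hcod J));
  tr_nat_ver : forall f, vcomp (alphaO (vcod f)) (FV F f) = vcomp (FV G f) (alphaO (vdom f));
  tr_nat_cell : forall phi,
      ccomp (FC F phi) (alphaH (ctgt phi)) = ccomp (alphaH (csrc phi)) (FC G phi);
  tr_unit : forall A, alphaH (hunit A) = cunit (alphaO A);
  tr_comp : forall J K, hcod J = hdom K ->
      ccomp (chcomp (alphaH J) (alphaH K)) (Fcomp G J K) =
      ccomp (Fcomp F J K) (alphaH (hcomp J K))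
}.

Record IsNormalLaxMonad {D : DCat} (T : LaxData D)
    (muO : ob D -> ver D) (muH : hor D -> cell D)
    (iotaO : ob D -> ver D) (iotaH : hor D -> cell D) : Prop := {
  monad_T : IsNormalLax T;
  monad_mu : IsDoubleTransformation (compLax T T) T muO muH;
  monad_iota : IsDoubleTransformation (idLax D) T iotaO iotaH;
  monad_assoc_O : forall A, vcomp (muO A) (FV T (muO A)) = vcomp (muO A) (muO (FO T A));
  monad_lunit_O : forall A, vcomp (muO A) (iotaO (FO T A)) = vid (FO T A);
  monad_runit_O : forall A, vcomp (muO A) (FV T (iotaO A)) = vid (FO T A);
  monad_assoc_H : forall J, ccomp (FC T (muH J)) (muH J) = ccomp (muH (FH T J)) (muH J);
  monad_lunit_H : forall J, ccomp (iotaH (FH T J)) (muH J) = cid (FH T J);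
  monad_runit_H : forall J, ccomp (FC T (iotaH J)) (muH J) = cid (FH T J)
}.

(* For any companion iota_{A*} of iota_A, presented by an opcartesian cell
   oA : 1_A => iota_{A*} with sides id_A, iota_A, and any companion iota_{B*}
   of iota_B, presented by a cartesian cell cB : iota_{B*} => 1_{TB} with
   sides iota_B, id_{TB}, the horizontal composite oA . iota_J . cB is
   an invertible (globular) cell.  Its boundary is
   (1_A . J) . iota_{B*} => (iota_{A*} . TJ) . 1_{TB}, which is iota_{J*}
   up to the (invertible) unitors. *)
Definition RightBC {D : DCat} (T : LaxData D)
    (iotaO : ob D -> ver D) (iotaH : hor D -> cell D) (J : hor D) : Prop :=
  forall (EA : hor D) (oA : cell D) (EB : hor D) (cB : cell D),
    IsCell oA (hunit (hdom J)) EA (vid (hdom J)) (iotaO (hdom J)) ->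
    opcartesian oA ->
    IsCell cB EB (hunit (FO T (hcod J))) (iotaO (hcod J)) (vid (FO T (hcod J))) ->
    cartesian cB ->
    globular_iso (chcomp (chcomp oA (iotaH J)) cB).

(* Write g^* for the conjoint of g, with counit γ : g^* ⇒ 1 and unit η : 1 ⇒ g^*.
   Factoring (1_K ⊙ γ) ; ρ through the cartesian cell K(id, g) ⇒ K yields a globular
   cell s : K ⊙ g^* ⇒ K(id, g), inverse to ρ⁻¹ ; (ρ ⊙ η).  The normal lax functor T
   preserves the triangle identities of (γ, η), which makes its compositor
   TK ⊙ Tg^* ⇒ T(K ⊙ g^* ) invertible as well.  By naturality of ι with respect to s and
   to the compositor, ι_{K(id,g)} satisfies the Beck–Chevalley condition as soon as the
   horizontal composite ι_K ⊙ ι_{g^*} does.  For the latter, paste the invertible cells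
   ι_{K*} and ι_{g^* *} along the companion ι_{D*}: its unit and counit compose to the
   identity cell of ι_D, which the right unitor absorbs. *)

From Stdlib Require Import ClassicalEpsilon.

Section Equipment.
Context {D : DCat} (HD : IsPseudoDouble D).
Context (T : LaxData D) (HT : IsNormalLax T).
Context (iotaO : ob D -> ver D) (iotaH : hor D -> cell D)
  (Hiota : IsDoubleTransformation (idLax D) T iotaO iotaH).
Implicit Types (a b c p q x y : cell D) (J K L X Y : hor D) (f g : ver D) (A B : ob D).

Notation "a ▷ b" := (ccomp a b) (at level 40, left associativity).
Notation "a ⊙ b" := (chcomp a b) (at level 33, left associativity).

(** * Boundaries of cells *)

Lemma csrc_ccomp a b : ctgt a = csrc b -> csrc (a ▷ b) = csrc a.
Proof. intro H. apply (ccomp_bd D HD a b H). Qed.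
Lemma ctgt_ccomp a b : ctgt a = csrc b -> ctgt (a ▷ b) = ctgt b.
Proof. intro H. apply (ccomp_bd D HD a b H). Qed.
Lemma cleft_ccomp a b : ctgt a = csrc b -> cleft (a ▷ b) = vcomp (cleft b) (cleft a).
Proof. intro H. apply (ccomp_bd D HD a b H). Qed.
Lemma cright_ccomp a b : ctgt a = csrc b -> cright (a ▷ b) = vcomp (cright b) (cright a).
Proof. intro H. apply (ccomp_bd D HD a b H). Qed.
Lemma csrc_chcomp a b : cright a = cleft b -> csrc (a ⊙ b) = hcomp (csrc a) (csrc b).
Proof. intro H. apply (chcomp_bd D HD a b H). Qed.
Lemma ctgt_chcomp a b : cright a = cleft b -> ctgt (a ⊙ b) = hcomp (ctgt a) (ctgt b).
Proof. intro H. apply (chcomp_bd D HD a b H). Qed.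
Lemma cleft_chcomp a b : cright a = cleft b -> cleft (a ⊙ b) = cleft a.
Proof. intro H. apply (chcomp_bd D HD a b H). Qed.
Lemma cright_chcomp a b : cright a = cleft b -> cright (a ⊙ b) = cright b.
Proof. intro H. apply (chcomp_bd D HD a b H). Qed.
Lemma csrc_cid J : csrc (cid J) = J. Proof. apply (cid_bd D HD J). Qed.
Lemma ctgt_cid J : ctgt (cid J) = J. Proof. apply (cid_bd D HD J). Qed.
Lemma cleft_cid J : cleft (cid J) = vid (hdom J). Proof. apply (cid_bd D HD J). Qed.
Lemma cright_cid J : cright (cid J) = vid (hcod J). Proof. apply (cid_bd D HD J). Qed.
Lemma csrc_cunit f : csrc (cunit f) = hunit (vdom f). Proof. apply (cunit_bd D HD f). Qed.
Lemma ctgt_cunit f : ctgt (cunit f) = hunit (vcod f). Proof. apply (cunit_bd D HD f). Qed.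
Lemma cleft_cunit f : cleft (cunit f) = f. Proof. apply (cunit_bd D HD f). Qed.
Lemma cright_cunit f : cright (cunit f) = f. Proof. apply (cunit_bd D HD f). Qed.
Lemma csrc_assoc J K L : hcod J = hdom K -> hcod K = hdom L ->
  csrc (assoc J K L) = hcomp (hcomp J K) L.
Proof. intros. apply (assoc_bd D HD J K L); auto. Qed.
Lemma ctgt_assoc J K L : hcod J = hdom K -> hcod K = hdom L ->
  ctgt (assoc J K L) = hcomp J (hcomp K L).
Proof. intros. apply (assoc_bd D HD J K L); auto. Qed.
Lemma cleft_assoc J K L : hcod J = hdom K -> hcod K = hdom L ->
  cleft (assoc J K L) = vid (hdom J).
Proof. intros. apply (assoc_bd D HD J K L); auto. Qed.
Lemma cright_assoc J K L : hcod J = hdom K -> hcod K = hdom L ->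
  cright (assoc J K L) = vid (hcod L).
Proof. intros. apply (assoc_bd D HD J K L); auto. Qed.
Lemma csrc_lunitor J : csrc (lunitor J) = hcomp (hunit (hdom J)) J.
Proof. apply (lunitor_bd D HD J). Qed.
Lemma ctgt_lunitor J : ctgt (lunitor J) = J. Proof. apply (lunitor_bd D HD J). Qed.
Lemma cleft_lunitor J : cleft (lunitor J) = vid (hdom J). Proof. apply (lunitor_bd D HD J). Qed.
Lemma cright_lunitor J : cright (lunitor J) = vid (hcod J). Proof. apply (lunitor_bd D HD J). Qed.
Lemma csrc_runitor J : csrc (runitor J) = hcomp J (hunit (hcod J)).
Proof. apply (runitor_bd D HD J). Qed.
Lemma ctgt_runitor J : ctgt (runitor J) = J. Proof. apply (runitor_bd D HD J). Qed.
Lemma cleft_runitor J : cleft (runitor J) = vid (hdom J). Proof. apply (runitor_bd D HD J). Qed.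
Lemma cright_runitor J : cright (runitor J) = vid (hcod J). Proof. apply (runitor_bd D HD J). Qed.
Lemma hdom_hcomp J K : hcod J = hdom K -> hdom (hcomp J K) = hdom J.
Proof. apply (hcomp_dom D HD). Qed.
Lemma hcod_hcomp J K : hcod J = hdom K -> hcod (hcomp J K) = hcod K.
Proof. apply (hcomp_cod D HD). Qed.
Lemma hdom_hunit A : hdom (hunit A) = A. Proof. apply (hunit_dom D HD). Qed.
Lemma hcod_hunit A : hcod (hunit A) = A. Proof. apply (hunit_cod D HD). Qed.
Lemma vdom_vid A : vdom (vid A) = A. Proof. apply (vid_dom D HD). Qed.
Lemma vcod_vid A : vcod (vid A) = A. Proof. apply (vid_cod D HD). Qed.
Lemma vdom_vcomp f g : vcod f = vdom g -> vdom (vcomp g f) = vdom f.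
Proof. apply (vcomp_dom D HD). Qed.
Lemma vcod_vcomp f g : vcod f = vdom g -> vcod (vcomp g f) = vcod g.
Proof. apply (vcomp_cod D HD). Qed.
Lemma vcomp_vidl f B : vcod f = B -> vcomp (vid B) f = f.
Proof. intros <-. apply (vcomp_idl D HD). Qed.
Lemma vcomp_vidr f A : vdom f = A -> vcomp f (vid A) = f.
Proof. intros <-. apply (vcomp_idr D HD). Qed.

Lemma csrc_FC a : csrc (FC T a) = FH T (csrc a). Proof. apply (FC_bd T HT). Qed.
Lemma ctgt_FC a : ctgt (FC T a) = FH T (ctgt a). Proof. apply (FC_bd T HT). Qed.
Lemma cleft_FC a : cleft (FC T a) = FV T (cleft a). Proof. apply (FC_bd T HT). Qed.
Lemma cright_FC a : cright (FC T a) = FV T (cright a). Proof. apply (FC_bd T HT). Qed.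
Lemma hdom_FH J : hdom (FH T J) = FO T (hdom J). Proof. apply (FH_dom T HT). Qed.
Lemma hcod_FH J : hcod (FH T J) = FO T (hcod J). Proof. apply (FH_cod T HT). Qed.
Lemma vdom_FV f : vdom (FV T f) = FO T (vdom f). Proof. apply (FV_dom T HT). Qed.
Lemma vcod_FV f : vcod (FV T f) = FO T (vcod f). Proof. apply (FV_cod T HT). Qed.
Lemma FH_hunitE A : FH T (hunit A) = hunit (FO T A). Proof. apply (FH_hunit T HT). Qed.
Lemma FV_vidE A : FV T (vid A) = vid (FO T A). Proof. apply (FV_vid T HT). Qed.
Lemma csrc_Fcomp J K : hcod J = hdom K -> csrc (Fcomp T J K) = hcomp (FH T J) (FH T K).
Proof. intro H. apply (Fcomp_bd T HT J K H). Qed.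
Lemma ctgt_Fcomp J K : hcod J = hdom K -> ctgt (Fcomp T J K) = FH T (hcomp J K).
Proof. intro H. apply (Fcomp_bd T HT J K H). Qed.
Lemma cleft_Fcomp J K : hcod J = hdom K -> cleft (Fcomp T J K) = vid (FO T (hdom J)).
Proof. intro H. apply (Fcomp_bd T HT J K H). Qed.
Lemma cright_Fcomp J K : hcod J = hdom K -> cright (Fcomp T J K) = vid (FO T (hcod K)).
Proof. intro H. apply (Fcomp_bd T HT J K H). Qed.

Lemma csrc_iota J : csrc (iotaH J) = J. Proof. apply (tr_bd _ _ _ _ Hiota J). Qed.
Lemma ctgt_iota J : ctgt (iotaH J) = FH T J. Proof. apply (tr_bd _ _ _ _ Hiota J). Qed.
Lemma cleft_iota J : cleft (iotaH J) = iotaO (hdom J). Proof. apply (tr_bd _ _ _ _ Hiota J). Qed.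
Lemma cright_iota J : cright (iotaH J) = iotaO (hcod J). Proof. apply (tr_bd _ _ _ _ Hiota J). Qed.
Lemma vdom_iota A : vdom (iotaO A) = A. Proof. apply (tr_dom _ _ _ _ Hiota A). Qed.
Lemma vcod_iota A : vcod (iotaO A) = FO T A. Proof. apply (tr_cod _ _ _ _ Hiota A). Qed.

Lemma ccompA a b c : ctgt a = csrc b -> ctgt b = csrc c -> a ▷ (b ▷ c) = a ▷ b ▷ c.
Proof. intros. apply (ccomp_assoc D HD); auto. Qed.
Lemma ccomp_cidl a J : csrc a = J -> cid J ▷ a = a.
Proof. intros <-. apply (ccomp_idl D HD). Qed.
Lemma ccomp_cidr a J : ctgt a = J -> a ▷ cid J = a.
Proof. intros <-. apply (ccomp_idr D HD). Qed.
Lemma chcomp_ccomp a b c d :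
  ctgt a = csrc b -> ctgt c = csrc d -> cright a = cleft c -> cright b = cleft d ->
  (a ▷ b) ⊙ (c ▷ d) = (a ⊙ c) ▷ (b ⊙ d).
Proof. intros. apply (interchange D HD); auto. Qed.

Lemma hdom_csrc a : hdom (csrc a) = vdom (cleft a). Proof. apply (cell_bd D HD a). Qed.
Lemma hcod_csrc a : hcod (csrc a) = vdom (cright a). Proof. apply (cell_bd D HD a). Qed.
Lemma hdom_ctgt a : hdom (ctgt a) = vcod (cleft a). Proof. apply (cell_bd D HD a). Qed.
Lemma hcod_ctgt a : hcod (ctgt a) = vcod (cright a). Proof. apply (cell_bd D HD a). Qed.

Lemma hdom_ctgt_globular a : globular a -> hdom (ctgt a) = hdom (csrc a).
Proof.
  intros [H1 _]. rewrite hdom_ctgt, H1, vcod_vid. reflexivity.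
Qed.
Lemma hcod_ctgt_globular a : globular a -> hcod (ctgt a) = hcod (csrc a).
Proof.
  intros [_ H2]. rewrite hcod_ctgt, H2, vcod_vid. reflexivity.
Qed.

(** * Globular isomorphisms *)

(* [ginv a] is the inverse of [a] when [a] is a globular isomorphism, and junk otherwise. *)
Definition ginv a : cell D := epsilon (inhabits a) (fun b => globular b /\ inverse_cells a b).

Lemma ginv_spec a : globular_iso a -> globular (ginv a) /\ inverse_cells a (ginv a).
Proof. intros [_ Hex]. exact (epsilon_spec _ _ Hex). Qed.
Lemma csrc_ginv a : globular_iso a -> csrc (ginv a) = ctgt a.
Proof. intro H. apply ginv_spec in H. apply H. Qed.
Lemma ctgt_ginv a : globular_iso a -> ctgt (ginv a) = csrc a.
Proof. intro H. apply ginv_spec in H. apply H. Qed.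
Lemma ccomp_ginv a : globular_iso a -> a ▷ ginv a = cid (csrc a).
Proof. intro H. apply ginv_spec in H. apply H. Qed.
Lemma ginv_ccomp a : globular_iso a -> ginv a ▷ a = cid (ctgt a).
Proof. intro H. apply ginv_spec in H. apply H. Qed.
Lemma cleft_ginv a : globular_iso a -> cleft (ginv a) = cleft a.
Proof.
  intro H. destruct (ginv_spec a H) as [[-> _] _].
  rewrite csrc_ginv, hdom_ctgt_globular by apply H. symmetry. apply H.
Qed.
Lemma cright_ginv a : globular_iso a -> cright (ginv a) = cright a.
Proof.
  intro H. destruct (ginv_spec a H) as [[_ ->] _].
  rewrite csrc_ginv, hcod_ctgt_globular by apply H. symmetry. apply H.
Qed.

(* Redefined with the closure lemmas for globular isomorphisms once they are proved. *)
Ltac iso_solve := assumption.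

Ltac bound_rewrite :=
  repeat first
   [ rewrite csrc_cid | rewrite ctgt_cid | rewrite cleft_cid | rewrite cright_cid
   | rewrite csrc_cunit | rewrite ctgt_cunit | rewrite cleft_cunit | rewrite cright_cunit
   | rewrite csrc_lunitor | rewrite ctgt_lunitor | rewrite cleft_lunitor | rewrite cright_lunitor
   | rewrite csrc_runitor | rewrite ctgt_runitor | rewrite cleft_runitor | rewrite cright_runitor
   | rewrite hdom_hunit | rewrite hcod_hunit | rewrite vdom_vid | rewrite vcod_vid
   | rewrite csrc_FC | rewrite ctgt_FC | rewrite cleft_FC | rewrite cright_FC
   | rewrite hdom_FH | rewrite hcod_FH | rewrite vdom_FV | rewrite vcod_FV
   | rewrite FH_hunitE | rewrite FV_vidE
   | rewrite csrc_iota | rewrite ctgt_iota | rewrite cleft_iota | rewrite cright_iota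
   | rewrite vdom_iota | rewrite vcod_iota
   | rewrite csrc_ccomp by bound_solve | rewrite ctgt_ccomp by bound_solve
   | rewrite cleft_ccomp by bound_solve | rewrite cright_ccomp by bound_solve
   | rewrite csrc_chcomp by bound_solve | rewrite ctgt_chcomp by bound_solve
   | rewrite cleft_chcomp by bound_solve | rewrite cright_chcomp by bound_solve
   | rewrite csrc_assoc by bound_solve | rewrite ctgt_assoc by bound_solve
   | rewrite cleft_assoc by bound_solve | rewrite cright_assoc by bound_solve
   | rewrite csrc_Fcomp by bound_solve | rewrite ctgt_Fcomp by bound_solve
   | rewrite cleft_Fcomp by bound_solve | rewrite cright_Fcomp by bound_solve
   | rewrite hdom_hcomp by bound_solve | rewrite hcod_hcomp by bound_solve
   | rewrite vdom_vcomp by bound_solve | rewrite vcod_vcomp by bound_solve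
   | rewrite vcomp_vidl by bound_solve | rewrite vcomp_vidr by bound_solve
   | rewrite csrc_ginv by iso_solve | rewrite ctgt_ginv by iso_solve
   | rewrite cleft_ginv by iso_solve | rewrite cright_ginv by iso_solve
   | match goal with H : cleft ?x = _ |- context [cleft ?x] => is_var x; rewrite H end
   | match goal with H : cright ?x = _ |- context [cright ?x] => is_var x; rewrite H end
   | match goal with H : csrc ?x = _ |- context [csrc ?x] => is_var x; rewrite H end
   | match goal with H : ctgt ?x = _ |- context [ctgt ?x] => is_var x; rewrite H end ]
with bound_solve := bound_rewrite; first [reflexivity | congruence].

Lemma iso_ccomp a b :
  ctgt a = csrc b -> globular_iso a -> globular_iso b -> globular_iso (a ▷ b).
Proof.
  intros E Ha Hb.
  pose proof (hdom_ctgt_globular a (proj1 Ha)). pose proof (hcod_ctgt_globular a (proj1 Ha)).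
  pose proof (hdom_ctgt_globular b (proj1 Hb)). pose proof (hcod_ctgt_globular b (proj1 Hb)).
  destruct (proj1 Ha) as [La Ra], (proj1 Hb) as [Lb Rb].
  split; [split; bound_solve|].
  exists (ginv b ▷ ginv a).
  split; [split; bound_solve|]. split; [bound_solve|split; [bound_solve|split]].
  - rewrite (ccompA (a ▷ b)), <- (ccompA a b (ginv b)) by bound_solve.
    rewrite ccomp_ginv, ccomp_cidr, ccomp_ginv by bound_solve. bound_solve.
  - rewrite (ccompA (ginv b ▷ ginv a)), <- (ccompA (ginv b) (ginv a) a) by bound_solve.
    rewrite ginv_ccomp, ccomp_cidr, ginv_ccomp by bound_solve. bound_solve.
Qed.

Lemma iso_chcomp a b :
  cright a = cleft b -> globular_iso a -> globular_iso b -> globular_iso (a ⊙ b).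
Proof.
  intros E Ha Hb.
  pose proof (hdom_ctgt_globular a (proj1 Ha)). pose proof (hcod_ctgt_globular a (proj1 Ha)).
  pose proof (hdom_ctgt_globular b (proj1 Hb)). pose proof (hcod_ctgt_globular b (proj1 Hb)).
  destruct (proj1 Ha) as [La Ra], (proj1 Hb) as [Lb Rb].
  assert (M : hcod (csrc a) = hdom (csrc b)).
  { rewrite Ra, Lb in E. apply (f_equal vdom) in E. rewrite !vdom_vid in E. exact E. }
  split; [split; bound_solve|].
  exists (ginv a ⊙ ginv b).
  split; [split; bound_solve|]. split; [bound_solve|split; [bound_solve|split]].
  - rewrite <- chcomp_ccomp, !ccomp_ginv by bound_solve.
    rewrite (chcomp_cid D HD) by exact M. bound_solve.
  - rewrite <- chcomp_ccomp, !ginv_ccomp by bound_solve.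
    rewrite (chcomp_cid D HD) by congruence. bound_solve.
Qed.

Lemma iso_cid J : globular_iso (cid J).
Proof.
  split; [split; bound_solve|]. exists (cid J). split; [split; bound_solve|].
  split; [bound_solve|split; [bound_solve|split]]; rewrite ccomp_cidl; bound_solve.
Qed.

Lemma iso_ginv a : globular_iso a -> globular_iso (ginv a).
Proof.
  intro Ha. destruct (ginv_spec a Ha) as [G [I1 [I2 [I3 I4]]]].
  split; [exact G|]. exists a. split; [exact (proj1 Ha)|].
  split; [bound_solve|split; [bound_solve|split]].
  - rewrite I4. bound_solve.
  - rewrite I3. bound_solve.
Qed.

Lemma iso_FC a : globular_iso a -> globular_iso (FC T a).
Proof.
  intro Ha. destruct (ginv_spec a Ha) as [[I1 I2] [E1 [E2 [E3 E4]]]].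
  pose proof (hdom_ctgt_globular a (proj1 Ha)). pose proof (hcod_ctgt_globular a (proj1 Ha)).
  destruct (proj1 Ha) as [La Ra].
  split; [split; bound_solve|].
  exists (FC T (ginv a)).
  split; [split; bound_solve|]. split; [bound_solve|split; [bound_solve|split]].
  - rewrite <- (FC_ccomp T HT), E3, (FC_cid T HT) by congruence. bound_solve.
  - rewrite <- (FC_ccomp T HT), E4, (FC_cid T HT) by congruence. bound_solve.
Qed.

Ltac iso_solve ::=
  first [ assumption | apply iso_cid | apply (lunitor_iso D HD) | apply (runitor_iso D HD)
        | apply iso_ginv; iso_solve | apply iso_FC; iso_solve
        | apply (assoc_iso D HD); bound_solve
        | apply iso_ccomp; [bound_solve | iso_solve | iso_solve]
        | apply iso_chcomp; [bound_solve | iso_solve | iso_solve] ].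

Ltac cell_solve := match goal with |- globular_iso _ => iso_solve | _ => bound_solve end.

Lemma ccomp_iso_cancel_l a x y : globular_iso a ->
  ctgt a = csrc x -> ctgt a = csrc y -> a ▷ x = a ▷ y -> x = y.
Proof.
  intros Ha Ex Ey E.
  rewrite <- (ccomp_cidl x (ctgt a)), <- (ccomp_cidl y (ctgt a)) by congruence.
  rewrite <- !ginv_ccomp, <- !ccompA, E by cell_solve. reflexivity.
Qed.

Lemma ccomp_iso_cancel_r a x y : globular_iso a ->
  ctgt x = csrc a -> ctgt y = csrc a -> x ▷ a = y ▷ a -> x = y.
Proof.
  intros Ha Ex Ey E.
  rewrite <- (ccomp_cidr x (csrc a)), <- (ccomp_cidr y (csrc a)) by assumption.
  rewrite <- !ccomp_ginv, !ccompA, E by cell_solve. reflexivity.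
Qed.

Lemma iso_of_square_l a b x y : globular_iso a -> globular_iso b -> globular_iso y ->
  ctgt x = csrc b -> ctgt a = csrc y -> x ▷ b = a ▷ y -> globular_iso x.
Proof.
  intros Ha Hb Hy E1 E2 E.
  assert (Et : ctgt y = ctgt b).
  { rewrite <- (ctgt_ccomp a y), <- (ctgt_ccomp x b), E by assumption. reflexivity. }
  replace x with (a ▷ y ▷ ginv b); [cell_solve|].
  rewrite <- E, <- ccompA, ccomp_ginv, ccomp_cidr by cell_solve. reflexivity.
Qed.

Lemma iso_of_square_r a b x y : globular_iso a -> globular_iso b -> globular_iso x ->
  ctgt x = csrc b -> ctgt a = csrc y -> x ▷ b = a ▷ y -> globular_iso y.
Proof.
  intros Ha Hb Hx E1 E2 E.
  assert (Es : csrc x = csrc a).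
  { rewrite <- (csrc_ccomp a y), <- (csrc_ccomp x b), E by assumption. reflexivity. }
  replace y with (ginv a ▷ x ▷ b); [cell_solve|].
  rewrite <- ccompA, E, ccompA, ginv_ccomp, ccomp_cidl by cell_solve. reflexivity.
Qed.

Lemma ginv_nat a b x y : globular_iso a -> globular_iso b ->
  ctgt x = csrc b -> ctgt a = csrc y -> csrc x = csrc a -> ctgt y = ctgt b ->
  x ▷ b = a ▷ y -> ginv a ▷ x = y ▷ ginv b.
Proof.
  intros Ha Hb E1 E2 E3 E4 E.
  transitivity (ginv a ▷ x ▷ b ▷ ginv b).
  - rewrite <- (ccompA (ginv a ▷ x) b (ginv b)), ccomp_ginv, ccomp_cidr by cell_solve.
    reflexivity.
  - rewrite <- (ccompA (ginv a) x b), E, (ccompA (ginv a) a y), ginv_ccomp, ccomp_cidl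
      by cell_solve.
    reflexivity.
Qed.

Lemma ginv_lunitor_nat x :
  ginv (lunitor (csrc x)) ▷ (cunit (cleft x) ⊙ x) = x ▷ ginv (lunitor (ctgt x)).
Proof.
  destruct (cell_bd D HD x) as [? [? [? ?]]].
  apply ginv_nat; try cell_solve. apply (lunitor_nat D HD).
Qed.

Lemma ginv_runitor_nat x :
  ginv (runitor (csrc x)) ▷ (x ⊙ cunit (cright x)) = x ▷ ginv (runitor (ctgt x)).
Proof.
  destruct (cell_bd D HD x) as [? [? [? ?]]].
  apply ginv_nat; try cell_solve. apply (runitor_nat D HD).
Qed.

(** * Coherence of the unitors *)

Lemma cid_chcomp_ccomp J x y : ctgt x = csrc y ->
  cleft x = vid (hcod J) -> cleft y = vid (hcod J) ->
  cid J ⊙ (x ▷ y) = (cid J ⊙ x) ▷ (cid J ⊙ y).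
Proof. intros. rewrite <- chcomp_ccomp, ccomp_cidl by cell_solve. reflexivity. Qed.

Lemma ccomp_chcomp_cid J x y : ctgt x = csrc y ->
  cright x = vid (hdom J) -> cright y = vid (hdom J) ->
  (x ▷ y) ⊙ cid J = (x ⊙ cid J) ▷ (y ⊙ cid J).
Proof. intros. rewrite <- chcomp_ccomp, ccomp_cidl by cell_solve. reflexivity. Qed.

Lemma cid_hunit_chcomp_inj A p q : cleft p = vid A -> cleft q = vid A ->
  csrc p = csrc q -> ctgt p = ctgt q -> cid (hunit A) ⊙ p = cid (hunit A) ⊙ q -> p = q.
Proof.
  intros Lp Lq Sp Tp E.
  pose proof (lunitor_nat D HD p) as Np. pose proof (lunitor_nat D HD q) as Nq.
  rewrite Lp, (cunit_vid D HD) in Np. rewrite Lq, (cunit_vid D HD) in Nq.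
  rewrite <- E, <- Tp, <- Sp in Nq. rewrite Np in Nq.
  apply ccomp_iso_cancel_l in Nq; cell_solve.
Qed.

Lemma chcomp_cid_hunit_inj B p q : cright p = vid B -> cright q = vid B ->
  csrc p = csrc q -> ctgt p = ctgt q -> p ⊙ cid (hunit B) = q ⊙ cid (hunit B) -> p = q.
Proof.
  intros Rp Rq Sp Tp E.
  pose proof (runitor_nat D HD p) as Np. pose proof (runitor_nat D HD q) as Nq.
  rewrite Rp, (cunit_vid D HD) in Np. rewrite Rq, (cunit_vid D HD) in Nq.
  rewrite <- E, <- Tp, <- Sp in Nq. rewrite Np in Nq.
  apply ccomp_iso_cancel_l in Nq; cell_solve.
Qed.

Lemma lunitor_hunit_hcomp X :
  lunitor (hcomp (hunit (hdom X)) X) = cid (hunit (hdom X)) ⊙ lunitor X.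
Proof.
  pose proof (lunitor_nat D HD (lunitor X)) as N.
  rewrite cleft_lunitor, ctgt_lunitor, csrc_lunitor, (cunit_vid D HD) in N.
  symmetry. apply (ccomp_iso_cancel_r (lunitor X)); cell_solve.
Qed.

Lemma assoc_hunit_lunitor X Y : hcod X = hdom Y ->
  assoc (hunit (hdom X)) X Y ▷ lunitor (hcomp X Y) = lunitor X ⊙ cid Y.
Proof.
  intro H.
  pose proof (pentagon D HD (hunit (hdom X)) (hunit (hdom X)) X Y) as P.
  rewrite !hcod_hunit, !hdom_hunit in P. specialize (P eq_refl eq_refl H).
  pose proof (triangle D HD (hunit (hdom X)) (hcomp X Y)) as T1.
  rewrite hcod_hunit in T1. specialize (T1 ltac:(cell_solve)).
  pose proof (triangle D HD (hunit (hdom X)) X) as T2.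
  rewrite hcod_hunit in T2. specialize (T2 eq_refl).
  pose proof (assoc_nat D HD (runitor (hunit (hdom X))) (cid X) (cid Y)) as N1.
  rewrite ctgt_runitor, !ctgt_cid, csrc_runitor, !csrc_cid, hcod_hunit in N1.
  specialize (N1 ltac:(cell_solve) ltac:(cell_solve)).
  rewrite (chcomp_cid D HD) in N1 by exact H.
  pose proof (assoc_nat D HD (cid (hunit (hdom X))) (lunitor X) (cid Y)) as N2.
  rewrite !ctgt_cid, ctgt_lunitor, !csrc_cid, csrc_lunitor in N2.
  specialize (N2 ltac:(cell_solve) ltac:(cell_solve)).
  apply (cid_hunit_chcomp_inj (hdom X)); try cell_solve.
  apply (ccomp_iso_cancel_l ((assoc (hunit (hdom X)) (hunit (hdom X)) X ⊙ cid Y)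
                    ▷ assoc (hunit (hdom X)) (hcomp (hunit (hdom X)) X) Y)); try cell_solve.
  transitivity (((runitor (hunit (hdom X)) ⊙ cid X) ⊙ cid Y) ▷ assoc (hunit (hdom X)) X Y).
  - rewrite cid_chcomp_ccomp, ccompA, <- P, <- ccompA, T1, <- N1 by cell_solve. reflexivity.
  - rewrite <- ccompA, <- N2, ccompA, <- ccomp_chcomp_cid, T2 by cell_solve. reflexivity.
Qed.

(* Kelly's coherence lemma [λ_1 = ρ_1], derived from the pentagon and the triangle. *)
Lemma lunitor_hunit A : lunitor (hunit A) = runitor (hunit A).
Proof.
  pose proof (triangle D HD (hunit A) (hunit A)) as Tr.
  rewrite !hcod_hunit, hdom_hunit in Tr. specialize (Tr eq_refl).
  pose proof (lunitor_hunit_hcomp (hunit A)) as E1. rewrite hdom_hunit in E1.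
  pose proof (assoc_hunit_lunitor (hunit A) (hunit A)) as E2.
  rewrite !hdom_hunit, hcod_hunit in E2. specialize (E2 eq_refl).
  rewrite E1, Tr in E2.
  apply (chcomp_cid_hunit_inj A); cell_solve.
Qed.

Lemma assoc_runitor X Y : hcod X = hdom Y ->
  assoc X Y (hunit (hcod Y)) ▷ (cid X ⊙ runitor Y) = runitor (hcomp X Y).
Proof.
  intro H.
  pose proof (pentagon D HD X Y (hunit (hcod Y)) (hunit (hcod Y))) as P.
  rewrite !hcod_hunit, !hdom_hunit in P. specialize (P H eq_refl eq_refl).
  pose proof (triangle D HD Y (hunit (hcod Y))) as T1.
  rewrite hdom_hunit in T1. specialize (T1 eq_refl).
  pose proof (triangle D HD (hcomp X Y) (hunit (hcod Y))) as T2.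
  rewrite (hcod_hcomp X Y H), hdom_hunit in T2. specialize (T2 eq_refl).
  pose proof (assoc_nat D HD (cid X) (cid Y) (lunitor (hunit (hcod Y)))) as Na.
  rewrite !ctgt_cid, ctgt_lunitor, !csrc_cid, csrc_lunitor, hdom_hunit in Na.
  specialize (Na ltac:(cell_solve) ltac:(cell_solve)).
  rewrite (chcomp_cid D HD) in Na by exact H.
  pose proof (assoc_nat D HD (cid X) (runitor Y) (cid (hunit (hcod Y)))) as Nb.
  rewrite !ctgt_cid, ctgt_runitor, !csrc_cid, csrc_runitor in Nb.
  specialize (Nb ltac:(cell_solve) ltac:(cell_solve)).
  apply (chcomp_cid_hunit_inj (hcod Y)); try cell_solve.
  apply (ccomp_iso_cancel_r (assoc X Y (hunit (hcod Y)))); try cell_solve.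
  transitivity ((assoc X Y (hunit (hcod Y)) ⊙ cid (hunit (hcod Y)))
     ▷ assoc X (hcomp Y (hunit (hcod Y))) (hunit (hcod Y))
     ▷ (cid X ⊙ (runitor Y ⊙ cid (hunit (hcod Y))))).
  - rewrite ccomp_chcomp_cid, <- ccompA, Nb, !ccompA by cell_solve. reflexivity.
  - symmetry. rewrite <- T2, <- ccompA, Na, ccompA, P by cell_solve.
    rewrite <- (ccompA _ (cid X ⊙ assoc Y (hunit (hcod Y)) (hunit (hcod Y)))) by cell_solve.
    rewrite <- cid_chcomp_ccomp, T1 by cell_solve. reflexivity.
Qed.

(** * Conjoints and companions *)

Lemma cartesian_inj (rho t t' : cell D) : cartesian rho ->
  csrc t = csrc t' -> ctgt t = csrc rho -> ctgt t' = csrc rho ->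
  cleft t = cleft t' -> cright t = cright t' -> t ▷ rho = t' ▷ rho -> t = t'.
Proof.
  intros Hrho S Tt Tt' L R E.
  destruct (cell_bd D HD rho) as [Dr [Cr _]].
  destruct (cell_bd D HD t) as [_ [_ [Dt Ct]]].
  destruct (Hrho (t ▷ rho) (cleft t) (cright t)) as [u [_ U]];
    [cell_solve | rewrite <- Dt, Tt; congruence | rewrite <- Ct, Tt; congruence
    | cell_solve | cell_solve |].
  rewrite csrc_ccomp in U by congruence.
  transitivity u; [symmetry|]; apply U; (split; [repeat split; congruence|]).
  - reflexivity.
  - symmetry. exact E.
Qed.

(* [gam : g^* => 1] is the counit and [eta : 1 => g^*] the unit of the conjoint
   [g^* = csrc gam]; the last two fields are the triangle identities. *)
Record conjoint_pair (g : ver D) (gam eta : cell D) : Prop := {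
  conjoint_tgt : ctgt gam = hunit (vcod g);
  conjoint_left : cleft gam = vid (vcod g);
  conjoint_right : cright gam = g;
  conjoint_unit_src : csrc eta = hunit (vdom g);
  conjoint_unit_tgt : ctgt eta = csrc gam;
  conjoint_unit_left : cleft eta = g;
  conjoint_unit_right : cright eta = vid (vdom g);
  conjoint_unit_counit : eta ▷ gam = cunit g;
  conjoint_counit_unit : (gam ⊙ eta) ▷ lunitor (csrc gam) = runitor (csrc gam) }.

Ltac conjoint_facts Hc DG CG :=
  lazymatch type of Hc with conjoint_pair ?g ?gam _ =>
    assert (DG : hdom (csrc gam) = vcod g)
      by (rewrite hdom_csrc, (conjoint_left _ _ _ Hc); apply vdom_vid);
    assert (CG : hcod (csrc gam) = vdom g)
      by (rewrite hcod_csrc, (conjoint_right _ _ _ Hc); reflexivity)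
  end.

Lemma conjoint_pair_of_cartesian g gam :
  ctgt gam = hunit (vcod g) -> cleft gam = vid (vcod g) -> cright gam = g -> cartesian gam ->
  exists eta, conjoint_pair g gam eta.
Proof.
  intros Tg Lg Rg Cg.
  assert (DG : hdom (csrc gam) = vcod g) by (rewrite hdom_csrc, Lg; apply vdom_vid).
  assert (CG : hcod (csrc gam) = vdom g) by (rewrite hcod_csrc, Rg; reflexivity).
  destruct (Cg (cunit g) g (vid (vdom g))) as [eta [[[Se [Te [Le Re]]] Ee] _]]; [cell_solve..|].
  rewrite csrc_cunit in Se.
  exists eta. split; try assumption.
  apply (cartesian_inj gam); [assumption | cell_solve .. |].
  rewrite <- (ccompA _ (lunitor (csrc gam)) gam) by cell_solve.
  rewrite <- (lunitor_nat D HD gam), Lg, (cunit_vid D HD).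
  rewrite ccompA, <- chcomp_ccomp, Ee, ccomp_cidr by cell_solve.
  rewrite Tg, lunitor_hunit.
  pose proof (runitor_nat D HD gam) as N. rewrite Rg, Tg in N. exact N.
Qed.

Lemma conjoint_pair_FC g gam eta :
  conjoint_pair g gam eta -> conjoint_pair (FV T g) (FC T gam) (FC T eta).
Proof.
  intro Hc. conjoint_facts Hc DG CG.
  destruct Hc as [Tg Lg Rg Se Te Le Re Eu Ez].
  split; try cell_solve.
  - rewrite <- (FC_ccomp T HT) by cell_solve.
    rewrite Eu. apply (FC_cunit T HT).
  - rewrite csrc_FC, <- (Fcomp_lunit T HT (csrc gam)), ccompA by cell_solve.
    pose proof (Fcomp_nat T HT gam eta) as N.
    rewrite Tg, Te, Se in N.
    rewrite DG, N by cell_solve.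
    rewrite <- ccompA, <- (FC_ccomp T HT), Ez, <- CG by cell_solve.
    apply (Fcomp_runit T HT).
Qed.

Lemma whisker_conjoint_pair J g gam eta : conjoint_pair g gam eta -> hcod J = vcod g ->
  ((cid J ⊙ gam) ▷ runitor J) ⊙ eta = runitor (hcomp J (csrc gam)).
Proof.
  intros Hc HJ. conjoint_facts Hc DG CG.
  destruct Hc as [Tg Lg Rg Se Te Le Re Eu Ez].
  rewrite <- (ccomp_cidr eta (csrc gam)), chcomp_ccomp by cell_solve.
  pose proof (triangle D HD J (csrc gam)) as Tr. rewrite HJ in Tr.
  rewrite <- Tr by cell_solve.
  pose proof (assoc_nat D HD (cid J) gam eta) as N.
  rewrite !ctgt_cid, !csrc_cid, Tg, Te, Se in N.
  rewrite ccompA, N, <- ccompA, <- cid_chcomp_ccomp by cell_solve.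
  rewrite Ez, <- CG. apply assoc_runitor. cell_solve.
Qed.

Lemma iso_Fcomp_conjoint K g gam eta : conjoint_pair g gam eta -> hcod K = vcod g ->
  globular_iso (Fcomp T K (csrc gam)).
Proof.
  intros Hc HK.
  pose proof (whisker_conjoint_pair K g gam eta Hc HK) as W.
  pose proof (whisker_conjoint_pair (FH T K) _ _ _ (conjoint_pair_FC g gam eta Hc)) as WT.
  rewrite csrc_FC in WT. specialize (WT ltac:(cell_solve)).
  conjoint_facts Hc DG CG. destruct Hc as [Tg Lg Rg Se Te Le Re Eu Ez].
  split; [split; cell_solve|].
  exists (ginv (runitor (FH T (hcomp K (csrc gam))))
          ▷ (FC T ((cid K ⊙ gam) ▷ runitor K) ⊙ FC T eta)).
  split; [split; cell_solve|]. split; [cell_solve|split; [cell_solve|split]].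
  - pose proof (ginv_runitor_nat (Fcomp T K (csrc gam))) as N.
    rewrite cright_Fcomp, ctgt_Fcomp, csrc_Fcomp, (cunit_vid D HD) in N by cell_solve.
    rewrite ccompA, <- N, <- ccompA, <- chcomp_ccomp by cell_solve.
    rewrite (FC_ccomp T HT), ccompA by cell_solve.
    pose proof (Fcomp_nat T HT (cid K) gam) as N2. rewrite !ctgt_cid, !csrc_cid, Tg in N2.
    rewrite <- N2, (FC_cid T HT), <- ccompA, <- HK, (Fcomp_runit T HT), ccomp_cidl by cell_solve.
    rewrite WT, ginv_ccomp by cell_solve. cell_solve.
  - pose proof (Fcomp_nat T HT ((cid K ⊙ gam) ▷ runitor K) eta) as N.
    rewrite ctgt_ccomp, ctgt_runitor, csrc_ccomp, csrc_chcomp, csrc_cid, Te, Se in N by cell_solve.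
    rewrite <- ccompA, N, W, <- CG, <- (hcod_hcomp K (csrc gam)), (Fcomp_runit T HT) by cell_solve.
    rewrite ginv_ccomp by cell_solve. cell_solve.
Qed.

Lemma restriction_conjoint_iso K g rho gam eta : conjoint_pair g gam eta -> vcod g = hcod K ->
  ctgt rho = K -> cleft rho = vid (hdom K) -> cright rho = g -> cartesian rho ->
  exists s, globular_iso s /\ csrc s = hcomp K (csrc gam) /\ ctgt s = csrc rho.
Proof.
  intros Hc HK Tr Lr Rr Cr.
  pose proof (whisker_conjoint_pair K g gam eta Hc (eq_sym HK)) as W.
  conjoint_facts Hc DG CG. destruct Hc as [Tg Lg Rg Se Te Le Re Eu Ez].
  assert (DR : hdom (csrc rho) = hdom K).
  { destruct (cell_bd D HD rho) as [-> _]. rewrite Lr. cell_solve. }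
  assert (CR : hcod (csrc rho) = vdom g).
  { destruct (cell_bd D HD rho) as [_ [-> _]]. rewrite Rr. reflexivity. }
  destruct (Cr ((cid K ⊙ gam) ▷ runitor K) (vid (hdom K)) (vid (vdom g)))
    as [s [[[Ss [Ts [Ls Rs]]] Es] _]]; [cell_solve..|].
  assert (Hs : csrc s = hcomp K (csrc gam)) by (rewrite Ss; cell_solve).
  exists s. split; [|split; assumption].
  split; [split; cell_solve|].
  exists (ginv (runitor (csrc rho)) ▷ (rho ⊙ eta)).
  split; [split; cell_solve|]. split; [cell_solve|split; [cell_solve|split]].
  - pose proof (ginv_runitor_nat s) as N. rewrite Rs, Ts, (cunit_vid D HD) in N.
    rewrite ccompA, <- N, <- ccompA, <- chcomp_ccomp, Es, ccomp_cidl, W by cell_solve.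
    rewrite Hs, ginv_ccomp by cell_solve. cell_solve.
  - rewrite Ts. apply (cartesian_inj rho); [assumption | cell_solve .. |].
    rewrite <- ccompA, Es by cell_solve.
    rewrite (ccompA (ginv (runitor (csrc rho)) ▷ (rho ⊙ eta))) by cell_solve.
    rewrite <- (ccompA (ginv (runitor (csrc rho))) (rho ⊙ eta)) by cell_solve.
    rewrite <- chcomp_ccomp, Eu, ccomp_cidr, <- ccompA by cell_solve.
    pose proof (runitor_nat D HD rho) as N. rewrite Tr, Rr in N.
    rewrite N, ccompA, ginv_ccomp, !ccomp_cidl by cell_solve. reflexivity.
Qed.

(* [cD : f_* => 1] is the counit and [th : 1 => f_*] the unit of the companion
   [f_* = csrc cD]. *)
Record companion_pair (f : ver D) (cD th : cell D) : Prop := {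
  companion_tgt : ctgt cD = hunit (vcod f);
  companion_left : cleft cD = f;
  companion_right : cright cD = vid (vcod f);
  companion_unit_src : csrc th = hunit (vdom f);
  companion_unit_tgt : ctgt th = csrc cD;
  companion_unit_left : cleft th = vid (vdom f);
  companion_unit_right : cright th = f;
  companion_unit_counit : th ▷ cD = cunit f;
  companion_counit_unit : (th ⊙ cD) ▷ runitor (csrc cD) = lunitor (csrc cD) }.

Ltac companion_facts Hc DC CC :=
  lazymatch type of Hc with companion_pair ?f ?cD _ =>
    assert (DC : hdom (csrc cD) = vdom f)
      by (rewrite hdom_csrc, (companion_left _ _ _ Hc); reflexivity);
    assert (CC : hcod (csrc cD) = vcod f)
      by (rewrite hcod_csrc, (companion_right _ _ _ Hc); apply vdom_vid)
  end.

Lemma companion_pair_of_cartesian f cD :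
  ctgt cD = hunit (vcod f) -> cleft cD = f -> cright cD = vid (vcod f) -> cartesian cD ->
  exists th, companion_pair f cD th.
Proof.
  intros Tc Lc Rc Cc.
  assert (DC : hdom (csrc cD) = vdom f) by (rewrite hdom_csrc, Lc; reflexivity).
  assert (CC : hcod (csrc cD) = vcod f) by (rewrite hcod_csrc, Rc; apply vdom_vid).
  destruct (Cc (cunit f) (vid (vdom f)) f) as [th [[[St [Tt [Lt Rt]]] Et] _]]; [cell_solve..|].
  rewrite csrc_cunit in St.
  exists th. split; try assumption.
  apply (cartesian_inj cD); [assumption | cell_solve .. |].
  rewrite <- (ccompA _ (runitor (csrc cD)) cD) by cell_solve.
  rewrite <- (runitor_nat D HD cD), Rc, (cunit_vid D HD).
  rewrite ccompA, <- chcomp_ccomp, Et, ccomp_cidr by cell_solve.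
  rewrite Tc, <- lunitor_hunit.
  pose proof (lunitor_nat D HD cD) as N. rewrite Lc, Tc in N. exact N.
Qed.

(* A cell [psi : 1 => H] with sides [h, k ∘ f] factors through [th] as
   [λ⁻¹ ; (psi ⊙ (cD ; 1_k)) ; ρ]; uniqueness is the triangle identity of the pair. *)
Lemma companion_unit_opcartesian f cD th : companion_pair f cD th -> opcartesian th.
Proof.
  intro Hc. companion_facts Hc DC CC. destruct Hc as [Tc Lc Rc St Tt Lt Rt Et Zt].
  intros psi h k S Lh Lk Lp Rp.
  rewrite Tt, Lt, Rt, vcod_vid in *. rewrite St in S.
  rewrite (vcomp_vidr h (vdom f) Lh) in Lp.
  assert (hcod (csrc psi) = vdom f) by (rewrite S; cell_solve).
  assert (hdom (ctgt psi) = vcod h) by (rewrite hdom_ctgt, Lp; reflexivity).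
  assert (hcod (ctgt psi) = vcod k) by (rewrite hcod_ctgt, Rp; cell_solve).
  exists (ginv (lunitor (csrc cD)) ▷ (psi ⊙ (cD ▷ cunit k)) ▷ runitor (ctgt psi)).
  split.
  - split; [repeat split; cell_solve|].
    pose proof (ginv_lunitor_nat th) as L. rewrite Tt, St, Lt, (cunit_vid D HD) in L.
    rewrite !ccompA, <- L, <- (ccompA (ginv (lunitor (hunit (vdom f))))) by cell_solve.
    rewrite <- chcomp_ccomp, ccomp_cidl, ccompA, Et, <- (cunit_vcomp D HD), <- Rp
      by cell_solve.
    rewrite <- ccompA, (runitor_nat D HD psi), S, ccompA, <- lunitor_hunit by cell_solve.
    rewrite ginv_ccomp, ccomp_cidl by cell_solve. reflexivity.
  - intros t [[A1 [A2 [A3 A4]]] Et']. symmetry.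
    transitivity
      (ginv (lunitor (csrc cD)) ▷ ((th ▷ t) ⊙ (cD ▷ cunit k)) ▷ runitor (ctgt psi));
      [|rewrite Et'; reflexivity].
    rewrite chcomp_ccomp by cell_solve.
    rewrite (ccompA (ginv (lunitor (csrc cD))) (th ⊙ cD)) by cell_solve.
    rewrite <- (ccompA (ginv (lunitor (csrc cD)) ▷ (th ⊙ cD))) by cell_solve.
    pose proof (runitor_nat D HD t) as N. rewrite A4, A2, A1 in N.
    rewrite N, ccompA, <- (ccompA (ginv (lunitor (csrc cD)))), Zt by cell_solve.
    rewrite ginv_ccomp, ccomp_cidl by cell_solve. reflexivity.
Qed.

(** * Beck–Chevalley cells *)

(* Interchange identifies [(1 ⊙ th) ; (a ⊙ cD)] with [a ⊙ (th ; cD) = a ⊙ 1_f], and the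
   right unitor absorbs [1_f]. *)
Lemma iso_paste_companion f cD th a x c : companion_pair f cD th ->
  cright a = f -> cleft x = f -> cright x = cleft c ->
  globular_iso (a ⊙ cD) -> globular_iso ((th ⊙ x) ⊙ c) -> globular_iso ((a ⊙ x) ⊙ c).
Proof.
  intros Hc Ra Lx Rx Ha Hb.
  companion_facts Hc DC CC. destruct Hc as [Tc Lc Rc St Tt Lt Rt Et Zt].
  pose proof (hcod_csrc a). pose proof (hcod_ctgt a).
  pose proof (hdom_csrc x). pose proof (hdom_ctgt x).
  pose proof (hcod_csrc x). pose proof (hcod_ctgt x).
  pose proof (hdom_csrc c). pose proof (hdom_ctgt c).
  assert (I1 : globular_iso ((cid (csrc a) ⊙ (th ⊙ x)) ⊙ c)).
  { eapply iso_of_square_l; [..| apply (assoc_nat D HD (cid (csrc a)) (th ⊙ x) c)].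
    all: cell_solve. }
  pose proof (assoc_nat D HD (cid (csrc a)) th x) as N2.
  rewrite csrc_cid, ctgt_cid in N2. specialize (N2 ltac:(cell_solve) ltac:(cell_solve)).
  assert (I2 : globular_iso (((cid (csrc a) ⊙ th) ⊙ x) ⊙ c)).
  { apply iso_of_square_l with (y := (cid (csrc a) ⊙ (th ⊙ x)) ⊙ c)
      (a := assoc (csrc a) (csrc th) (csrc x) ⊙ cid (csrc c))
      (b := assoc (csrc a) (ctgt th) (ctgt x) ⊙ cid (ctgt c));
      [..| rewrite <- !chcomp_ccomp, ccomp_cidr, ccomp_cidl, N2 by cell_solve; reflexivity].
    all: cell_solve. }
  assert (I3 : globular_iso (((a ⊙ cunit f) ⊙ x) ⊙ c)).
  { replace (((a ⊙ cunit f) ⊙ x) ⊙ c)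
      with ((((cid (csrc a) ⊙ th) ⊙ x) ⊙ c)
            ▷ (((a ⊙ cD) ⊙ cid (ctgt x)) ⊙ cid (ctgt c))).
    - cell_solve.
    - rewrite <- !chcomp_ccomp, !ccomp_cidr, ccomp_cidl, Et by cell_solve. reflexivity. }
  pose proof (runitor_nat D HD a) as N. rewrite Ra in N.
  apply iso_of_square_r with (x := ((a ⊙ cunit f) ⊙ x) ⊙ c)
    (a := (runitor (csrc a) ⊙ cid (csrc x)) ⊙ cid (csrc c))
    (b := (runitor (ctgt a) ⊙ cid (ctgt x)) ⊙ cid (ctgt c));
    [..| rewrite <- !chcomp_ccomp, !ccomp_cidr, !ccomp_cidl, N by cell_solve; reflexivity].
  all: cell_solve.
Qed.

Lemma iota_hcomp_BC (HE : IsEquipment D) J G : hcod J = hdom G ->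
  RightBC T iotaO iotaH J -> RightBC T iotaO iotaH G ->
  forall EA oA EC cC,
  IsCell oA (hunit (hdom J)) EA (vid (hdom J)) (iotaO (hdom J)) -> opcartesian oA ->
  IsCell cC EC (hunit (FO T (hcod G))) (iotaO (hcod G)) (vid (FO T (hcod G))) -> cartesian cC ->
  globular_iso ((oA ⊙ (iotaH J ⊙ iotaH G)) ⊙ cC).
Proof.
  intros HJG BCJ BCG EA oA EC cC HoA OoA HcC CcC.
  destruct (HE (iotaO (hcod J))) as [[ED [cD [[Sd [Td [Ld Rd]]] Cd]]] _]. subst ED.
  destruct (companion_pair_of_cartesian _ cD Td Ld Rd Cd) as [th Hc].
  pose proof (companion_unit_opcartesian _ _ _ Hc) as Oth.
  rewrite vcod_iota in Td, Rd.
  assert (YJ : globular_iso ((oA ⊙ iotaH J) ⊙ cD)).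
  { apply (BCJ EA oA (csrc cD) cD); auto. repeat split; assumption. }
  assert (YG : globular_iso ((th ⊙ iotaH G) ⊙ cC)).
  { apply (BCG (csrc cD) th EC cC); auto. destruct Hc.
    repeat split; try cell_solve; rewrite <- HJG; cell_solve. }
  destruct HoA as [So [To [Lo Ro]]], HcC as [Sc [Tc [Lc Rc]]].
  assert (hcod (ctgt oA) = FO T (hdom J)) by (rewrite hcod_ctgt, Ro; apply vcod_iota).
  assert (hdom (csrc cC) = hcod G) by (rewrite hdom_csrc, Lc; apply vdom_iota).
  apply iso_of_square_r with (x := ((oA ⊙ iotaH J) ⊙ iotaH G) ⊙ cC)
    (a := assoc (csrc oA) J G ⊙ cid (csrc cC))
    (b := assoc (ctgt oA) (FH T J) (FH T G) ⊙ cid (ctgt cC)).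
  all: try cell_solve.
  - apply (iso_paste_companion _ cD th _ _ _ Hc); cell_solve.
  - pose proof (assoc_nat D HD oA (iotaH J) (iotaH G)) as N.
    rewrite !csrc_iota, !ctgt_iota in N.
    rewrite <- !chcomp_ccomp, ccomp_cidr, ccomp_cidl, N by cell_solve. reflexivity.
Qed.

Lemma iota_BC_transport J G s oA cC : hcod J = hdom G ->
  globular_iso s -> csrc s = hcomp J G -> globular_iso (Fcomp T J G) ->
  cright oA = iotaO (hdom J) -> cleft cC = iotaO (hcod G) ->
  globular_iso ((oA ⊙ (iotaH J ⊙ iotaH G)) ⊙ cC) ->
  globular_iso ((oA ⊙ iotaH (ctgt s)) ⊙ cC).
Proof.
  intros HJG Hs Ss HF Ro Lc HBC.
  destruct (proj1 Hs) as [Ls Rs].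
  assert (hdom (ctgt s) = hdom J)
    by (rewrite hdom_ctgt_globular, Ss by apply Hs; cell_solve).
  assert (hcod (ctgt s) = hcod G)
    by (rewrite hcod_ctgt_globular, Ss by apply Hs; cell_solve).
  assert (hcod (csrc oA) = hdom J) by (rewrite hcod_csrc, Ro; apply vdom_iota).
  assert (hcod (ctgt oA) = FO T (hdom J)) by (rewrite hcod_ctgt, Ro; apply vcod_iota).
  assert (hdom (csrc cC) = hcod G) by (rewrite hdom_csrc, Lc; apply vdom_iota).
  assert (hdom (ctgt cC) = FO T (hcod G)) by (rewrite hdom_ctgt, Lc; apply vcod_iota).
  pose proof (tr_nat_cell _ _ _ _ Hiota s) as Ns. simpl in Ns. rewrite Ss in Ns.
  pose proof (tr_comp _ _ _ _ Hiota J G HJG) as Nc. simpl in Nc.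
  rewrite ccomp_cidl in Nc by cell_solve.
  apply iso_of_square_r with (x := (oA ⊙ (iotaH J ⊙ iotaH G)) ⊙ cC)
    (a := (cid (csrc oA) ⊙ s) ⊙ cid (csrc cC))
    (b := (cid (ctgt oA) ⊙ (Fcomp T J G ▷ FC T s)) ⊙ cid (ctgt cC)).
  all: try cell_solve.
  rewrite <- !chcomp_ccomp, !ccomp_cidr, !ccomp_cidl, ccompA, Nc, Ns by cell_solve.
  reflexivity.
Qed.

End Equipment.

Theorem lemma5p9 (D : DCat) (HD : IsPseudoDouble D) (HE : IsEquipment D)
  (T : LaxData D) (muO : ob D -> ver D) (muH : hor D -> cell D)
  (iotaO : ob D -> ver D) (iotaH : hor D -> cell D)
  (HT : IsNormalLaxMonad T muO muH iotaO iotaH)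
  (K : hor D) (g : ver D) (HgK : vcod g = hcod K)
  (R : hor D) (rho : cell D)
  (Hrho : IsCell rho R K (vid (hdom K)) g) (Hcart : cartesian rho)
  (HBC_K : RightBC T iotaO iotaH K)
  (HBC_g : forall (G : hor D) (gamma : cell D),
      IsCell gamma G (hunit (vcod g)) (vid (vcod g)) g -> cartesian gamma ->
      RightBC T iotaO iotaH G) :
  RightBC T iotaO iotaH R.
Proof.
  pose proof (monad_T _ _ _ _ _ HT) as HTl. pose proof (monad_iota _ _ _ _ _ HT) as Hi.
  destruct Hrho as [<- [Tr [Lr Rr]]].
  destruct (HE g) as [_ [G [gam [[<- [Tg [Lg Rg]]] Cg]]]].
  destruct (conjoint_pair_of_cartesian HD g gam Tg Lg Rg Cg) as [eta Hc].
  destruct (restriction_conjoint_iso HD K g rho gam eta Hc HgK Tr Lr Rr Hcart)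
    as [s [Hs [Ss <-]]].
  assert (HKG : hcod K = hdom (csrc gam))
    by (rewrite (hdom_csrc HD), Lg, (vdom_vid HD); symmetry; exact HgK).
  assert (Hdom : hdom (ctgt s) = hdom K)
    by (rewrite (hdom_ctgt_globular HD), Ss, (hdom_hcomp HD) by (exact HKG || apply Hs);
        reflexivity).
  assert (Hcod : hcod (ctgt s) = hcod (csrc gam))
    by (rewrite (hcod_ctgt_globular HD), Ss, (hcod_hcomp HD) by (exact HKG || apply Hs);
        reflexivity).
  intros EA oA EC cC HoA OoA HcC CcC. rewrite Hdom in HoA. rewrite Hcod in HcC.
  apply (iota_BC_transport HD T HTl iotaO iotaH Hi K (csrc gam) s); auto.
  - apply (iso_Fcomp_conjoint HD T HTl K g gam eta Hc). congruence.
  - apply HoA.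
  - apply HcC.
  - apply (iota_hcomp_BC HD T HTl iotaO iotaH Hi HE K (csrc gam) HKG HBC_K) with EA EC;
      auto.
    apply (HBC_g _ gam); [repeat split|]; assumption.
Qed.
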